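(* Let $(G,\rho)$ and $(G',\rho')$ be ribbon graphs on the same two vertices $v,w$, each having $n$ edges (all joining $v$ and $w$). Let $\hat\gamma:\operatorname{Pic}^0(G)\to\operatorname{Pic}^0(G')$ be the isomorphism induced by the identity on $V_{gen}=\{v,w\}$ (sending the class of a configuration to the class of the configuration with the same number of chips on each vertex). Fix $\alpha\in\{\text{rotor routing},\text{Bernardi}\}$ and suppose there is a bijection $\varphi:\mathcal T(G)\to\mathcal T(G')$ such that for each $u\in\{v,w\}$, $\varphi(\alpha_u^{G}(S,T))=\alpha_u^{G'}(\hat\gamma(S),\varphi(T))$ for all $S\in\operatorname{Pic}^0(G)$, $T\in\mathcal T(G)$. Then $(G,\rho)$ and $(G',\rho')$ have the same genus.
   Context: Graphs are finite, connected, loopless, possibly with multiple edges; a two-vertex such graph with $n$ edges has $\operatorname{Pic}^0\cong\mathbb Z/n\mathbb Z$ and its spanning trees are the single edges. A ribbon graph assigns to each vertex $u$ a cyclic order $\rho_u$ on incident edges. $\operatorname{Pic}^0$ is degree-zero chip configurations modulo firings (firing $u$ sends one chip from $u$ along each incident edge); $\operatorname{Pic}^k$ likewise for degree $k$. Rotor routing torsor $r_u$: for $S\in\operatorname{Pic}^0$, $T\in\mathcal T$, take a representative of $S$ nonnegative away from $u$; orient $T$ towards $u$ giving each other vertex a rotor; while some vertex $x\neq u$ has positive chips, advance its rotor to the next edge of $\rho_x$ and send a chip along it; at the end the rotors form $r_u(S,T)$. Bernardi torsor $\beta_u$: using half-edges $(e,x)$, for $T$ start at $(e_0,u)$ with $e_0$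 a fixed edge at $u$; at $(e',x')$: if $e'\in T$ with other endpoint $y$, move to $(e'',y)$, $e''$ following $e'$ in $\rho_y$; if $e'\notin T$, move to $(\tilde e,x')$, $\tilde e$ following $e'$ in $\rho_{x'}$, placing a chip on $x'$ if the other half-edge of $e'$ was not yet visited; stop on return to $(e_0,u)$. This gives divisors $D_T$ of degree $|E|-|V|+1$ in bijection with $\operatorname{Pic}^{|E|-|V|+1}$, and $\beta_u(S,T)$ is the unique $T'$ with $[D_{T'}]=[D_T]+S$. Genus: a cycle is a closed walk which, entering $x$ along $e$, exits along the edge following $e$ in $\rho_x$; the genus $g$ satisfies $2g=2-|V|+|E|-\operatorname{cyc}$, with $\operatorname{cyc}$ the number of cycles. *)

(* Two-vertex ribbon graphs: vertices are booleans
   (true = v, false = w); the n edges (all joining v and w) are 'I_n. *)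
From mathcomp Require Import all_boot all_order all_fingroup all_algebra.
Set Implicit Arguments. Unset Strict Implicit. Unset Printing Implicit Defensive.
Import GRing.Theory Num.Theory.

Definition vtx := bool.

(* A cyclic order on the n edges at a vertex, given by its "next edge" map:
   a permutation with a single orbit. *)
Definition cyclic_order n (s : {perm 'I_n}) : Prop :=
  forall e e' : 'I_n, fconnect s e e'.

(* Darts (e, x): traverse e starting from x.  Entering the other endpoint y
   along e, the walk exits along the edge following e in rho_y. *)
Definition face_step n (rho : vtx -> {perm 'I_n}) (d : 'I_n * vtx)
  : 'I_n * vtx := (rho (~~ d.2) d.1, ~~ d.2).

Definition ncycles n (rho : vtx -> {perm 'I_n}) : nat :=
  fcard (face_step rho) (predT : {pred 'I_n * vtx}).

(* 2g = 2 - |V| + |E| - cyc, with |V| = 2, |E| = n *)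
Definition genus n (rho : vtx -> {perm 'I_n}) : nat :=
  (2 + n - 2 - ncycles rho)./2.

Definition divisor := vtx -> int.
Definition deg0 (D : divisor) : Prop := (D true + D false = 0)%R.

(* firing x: x loses one chip along each of its n edges, the other vertex
   receives n chips *)
Definition fire n (x : vtx) : divisor :=
  fun y => if y == x then (- ((Posz n)))%R else (Posz n).

Definition lin_equiv n (D D' : divisor) : Prop :=
  exists c : vtx -> int,
    forall y, D' y = (D y + \sum_(x : vtx) c x * fire n x y)%R.

Definition gamma_hat (S : divisor) : divisor := S.

(* Spanning trees are single edges.  For sink u, the other vertex x = ~~u
   has rotor T.  Representative of S nonnegative away from u: the one with
   (S x mod n) chips on x.  Each chip: advance the rotor, send a chip. *)
Definition rotor n (rho : vtx -> {perm 'I_n}) (u : vtx) (S : divisor)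
  (T : 'I_n) : 'I_n :=
  iter `|(S (~~ u) %% (Posz n))%Z|%N (rho (~~ u)) T.

Definition bern_step n (rho : vtx -> {perm 'I_n}) (T : 'I_n)
  (h : 'I_n * vtx) : 'I_n * vtx :=
  if h.1 == T then (rho (~~ h.2) h.1, ~~ h.2) else (rho h.2 h.1, h.2).

Definition bern_tour n (rho : vtx -> {perm 'I_n}) (e0 : vtx -> 'I_n)
  (u : vtx) (T : 'I_n) : seq ('I_n * vtx) :=
  fingraph.orbit (bern_step rho T) (e0 u, u).

Definition bern_div n (rho : vtx -> {perm 'I_n}) (e0 : vtx -> 'I_n)
  (u : vtx) (T : 'I_n) : divisor :=
  fun y =>
    let t := bern_tour rho e0 u T in
    Posz (\sum_(i < size t | let h := nth (e0 u, u) t i in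
                         [&& h.2 == y, h.1 != T &
                             (h.1, ~~ h.2) \notin take i t]) 1)%N.

(* T' = beta_u(S, T)  iff  [D_T'] = [D_T] + S *)
Definition bern_rel n (rho : vtx -> {perm 'I_n}) (e0 : vtx -> 'I_n)
  (u : vtx) (S : divisor) (T T' : 'I_n) : Prop :=
  lin_equiv n (fun y => (bern_div rho e0 u T y + S y)%R) (bern_div rho e0 u T').

Inductive torsor_kind := RotorRouting | Bernardi.

(* torsor_rel k ... u S T T'  <->  T' = alpha_u(S, T) *)
Definition torsor_rel (k : torsor_kind) n (rho : vtx -> {perm 'I_n})
  (e0 : vtx -> 'I_n) (u : vtx) (S : divisor) (T T' : 'I_n) : Prop :=
  match k with
  | RotorRouting => T' = rotor rho u S T
  | Bernardi => bern_rel rho e0 u S T T'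
  end.

From mathcomp Require Import all_boot all_order all_fingroup all_algebra zify.
Set Implicit Arguments. Unset Strict Implicit. Unset Printing Implicit Defensive.
Import GRing.Theory.

(* The genus only depends on the number of cycles of the face permutation
   (e, x) |-> (rho_(~x) e, ~x), and conjugate permutations have equally many
   cycles; so it suffices to show that phi conjugates rho_x into rho'_x at both
   vertices.  This is read off from the action of the degree-zero class
   S_x = (+1 at x, -1 at the other vertex), which sends every tree T to rho_x T
   for both torsors.  For rotor routing with sink ~x, the single chip on x
   advances the rotor at x once.  For Bernardi with root u, the tour of T walks
   the edges at u from e0 u up to T, crosses T and goes once around the other
   vertex, then crosses back and finishes the edges at u; hence D_T has k chips
   on u and n - 1 - k on the other vertex, where T is the k-th successor of
   e0 u in rho_u, and [D_T] + S_u = [D_T'] exactly when T' is the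
   (k + 1 mod n)-th successor, i.e. T' = rho_u T. *)

Lemma card_predC_uniq n (s : seq 'I_n) : uniq s -> #|[predC s]| = n - size s.
Proof.
move=> uniq_s; have := cardC [in s]; rewrite card_ord (card_uniqP uniq_s).
exact: canRL (addKn _).
Qed.

Section CyclicOrder.
Variables (n : nat) (s : {perm 'I_n}).
Hypothesis cyc : cyclic_order s.

Lemma order_cyclic x : fingraph.order s x = n.
Proof. by rewrite -[RHS]card_ord; apply: eq_card => y; rewrite !inE cyc. Qed.

Lemma iter_cyclic_n x : iter n s x = x.
Proof. by have := iter_order (@perm_inj _ s) x; rewrite order_cyclic. Qed.

Lemma iter_modn m x : iter (m %% n) s x = iter m s x.
Proof. by rewrite {2}(divn_eq m n) iterD iterM [RHS]iter_fix // iter_cyclic_n. Qed.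

Lemma eq_iter_cyclic i j x :
  i < n -> j < n -> (iter i s x == iter j s x) = (i == j).
Proof.
move=> lt_i lt_j; rewrite -(order_cyclic x) in lt_i lt_j.
by apply/eqP/eqP => [eq_ij|-> //]; rewrite -(findex_iter lt_i) eq_ij findex_iter.
Qed.

Lemma findex_cyclic_lt x y : findex s x y < n.
Proof. by have := findex_max (cyc x y); rewrite order_cyclic. Qed.

Lemma iter_findex_cyclic x y : iter (findex s x y) s x = y.
Proof. exact: iter_findex. Qed.

Lemma findex_cyclic_inj x : injective (findex s x).
Proof.
by move=> y z eq_yz; rewrite -(iter_findex_cyclic x y) eq_yz iter_findex_cyclic.
Qed.

Lemma findex_succ x y : findex s x (s y) = (findex s x y).+1 %% n.
Proof.
rewrite -{1}(iter_findex_cyclic x y) -iterS -iter_modn findex_iter //.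
by rewrite order_cyclic ltn_pmod // (leq_ltn_trans _ (findex_cyclic_lt x y)).
Qed.

Lemma traject_cyclic x : traject s x n = fingraph.orbit s x.
Proof. by rewrite /fingraph.orbit order_cyclic. Qed.

Lemma traject_cyclic_uniq x : uniq (traject s x n).
Proof. by rewrite traject_cyclic orbit_uniq. Qed.

Lemma mem_traject_cyclic x y : y \in traject s x n.
Proof. by rewrite traject_cyclic -fconnect_orbit. Qed.

Lemma count_traject_cyclic (P : pred 'I_n) x : count P (traject s x n) = #|P|.
Proof.
rewrite -size_filter -(card_uniqP _) ?filter_uniq ?traject_cyclic_uniq //.
by apply: eq_card => y; rewrite mem_filter mem_traject_cyclic andbT.
Qed.

Lemma count_predC_traject_cyclic (A : seq 'I_n) x :
  uniq A -> count [predC A] (traject s x n) = n - size A.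
Proof. by move=> uniq_A; rewrite count_traject_cyclic card_predC_uniq. Qed.

End CyclicOrder.

Lemma fcycle_traject (T : eqType) (f : T -> T) x m :
  0 < m -> iter m f x = x -> fcycle f (traject f x m).
Proof.
case: m => // m _ fix_x; rewrite /cycle /= rcons_path fpath_traject /=.
by rewrite last_traject -iterS fix_x.
Qed.

Lemma mem_map_pair (A B : eqType) (b : B) (a : A) s :
  ((a, b) \in map (pair^~ b) s) = (a \in s).
Proof. by rewrite mem_map // => a1 a2 []. Qed.

Lemma fcard_conj (T T' : finType) (f : T -> T) (f' : T' -> T') (h : T -> T') :
    injective f -> injective f' -> bijective h ->
    (forall x, h (f x) = f' (h x)) ->
  fcard f T = fcard f' T'.
Proof.
move=> inj_f inj_f' bij_h hf; have inj_h := bij_inj bij_h.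
rewrite (adjunction_n_comp h (fconnect_sym inj_f') (fconnect_sym inj_f)) //.
apply: strict_adjunction => //; first exact: fconnect_sym.
  by apply/subsetP => x _; have [g _ hg] := bij_h; rewrite -[x]hg codom_f.
by move=> x y _ /=; rewrite -hf (inj_eq inj_h).
Qed.

Lemma ncycles_conj n (rho rho' : vtx -> {perm 'I_n}) (phi : 'I_n -> 'I_n) :
    bijective phi -> (forall x e, phi (rho x e) = rho' x (phi e)) ->
  ncycles rho = ncycles rho'.
Proof.
have face_step_inj r : injective (@face_step n r).
  by move=> [e x] [e' x'] [+ /negb_inj eq_x]; rewrite eq_x => /perm_inj ->.
move=> [psi phiK psiK] comm.
apply: (fcard_conj (h := fun d => (phi d.1, d.2))) => //.
- by exists (fun d => (psi d.1, d.2)) => -[e x] /=; rewrite ?phiK ?psiK.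
- by move=> [e x]; rewrite /face_step /= comm.
Qed.

Lemma modn_int_shift (m r n : nat) :
  r < n -> (exists d : int, Posz r = (Posz m + d * Posz n)%R) <-> r = m %% n.
Proof.
move=> lt_rn; split => [[d /(congr1 (modz^~ n))]|->].
  by rewrite addrC modzMDl !modz_nat (modn_small lt_rn) => -[].
by exists (- Posz (m %/ n))%R; lia.
Qed.

Lemma sum_fire n (c : vtx -> int) y :
  (\sum_(x : vtx) c x * fire n x y = (c (~~ y) - c y) * Posz n)%R.
Proof. by rewrite big_bool /fire; case: y => /=; lia. Qed.

Lemma lin_equiv_two_vertex n (D D' : divisor) u :
    (D u + D (~~ u) = D' u + D' (~~ u))%R ->
  lin_equiv n D D' <-> exists d : int, (D' u = D u + d * Posz n)%R.
Proof.
move=> eq_deg; split => [[c eqD']|[d eqD']].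
  by exists (c (~~ u) - c u)%R; rewrite eqD' sum_fire.
exists (fun y => if y == u then 0%R else d) => y; rewrite sum_fire.
by case: u y eq_deg eqD' => -[] /=; lia.
Qed.

Definition unit_div (u : vtx) : divisor :=
  fun y => if y == u then 1%R else (-1)%R.

Lemma deg0_unit_div u : deg0 (unit_div u).
Proof. by case: u. Qed.

Lemma rotor_unit_div n (rho : vtx -> {perm 'I_n}) x T :
  cyclic_order (rho x) -> rotor rho (~~ x) (unit_div x) T = rho x T.
Proof.
by move=> cyc; rewrite /rotor negbK /unit_div eqxx modz_nat absz_nat iter_modn.
Qed.

Definition chip_at n (y : vtx) (T : 'I_n) (visited : seq ('I_n * vtx))
    (h : 'I_n * vtx) : bool :=
  [&& h.2 == y, h.1 != T & (h.1, ~~ h.2) \notin visited].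

Lemma chip_atE n y (T : 'I_n) visited e x :
  chip_at y T visited (e, x) = [&& x == y, e != T & (e, ~~ x) \notin visited].
Proof. by []. Qed.

Fixpoint chips n (y : vtx) (T : 'I_n) visited t : nat :=
  if t is h :: t' then chip_at y T visited h + chips y T (rcons visited h) t'
  else 0.

Lemma sum_chip_at n y (T : 'I_n) h0 visited t :
  (\sum_(i < size t | chip_at y T (visited ++ take i t) (nth h0 t i)) 1)%N =
  chips y T visited t.
Proof.
elim: t visited => [|h t IHt] visited; first by rewrite big_ord0.
rewrite big_mkcond big_ord_recl /= cats0 -(IHt (rcons visited h)).
by rewrite [in RHS]big_mkcond; congr (_ + _); apply: eq_bigr => i _; rewrite cat_rcons.
Qed.

Lemma chips_cat n y (T : 'I_n) visited t1 t2 :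
  chips y T visited (t1 ++ t2) =
  chips y T visited t1 + chips y T (visited ++ t1) t2.
Proof.
elim: t1 visited => [|h t1 IHt1] visited /=; first by rewrite cats0.
by rewrite IHt1 cat_rcons addnA.
Qed.

Lemma chips_at_vertex n y (T : 'I_n) x visited s :
  chips y T visited (map (pair^~ x) s) =
  count (fun e => chip_at y T visited (e, x)) s.
Proof.
elim: s visited => [|e s IHs] visited //=; rewrite IHs; congr (_ + _).
apply: eq_count => e'; rewrite !chip_atE mem_rcons in_cons xpair_eqE.
by case: (x); rewrite andbF.
Qed.

Lemma chips_off_vertex n y (T : 'I_n) x visited s :
  x != y -> chips y T visited (map (pair^~ x) s) = 0.
Proof.
move=> neq_xy; rewrite chips_at_vertex; apply/eqP; rewrite -leqn0 leqNgt -has_count.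
by apply/hasPn => e _; rewrite chip_atE (negbTE neq_xy).
Qed.

Lemma bern_div_chips n (rho : vtx -> {perm 'I_n}) e0 u T y :
  bern_div rho e0 u T y = chips y T [::] (bern_tour rho e0 u T).
Proof. exact: (congr1 Posz (sum_chip_at y T (e0 u, u) [::] _)). Qed.

Section BernardiTour.
Variables (n : nat) (rho : vtx -> {perm 'I_n}) (e0 : vtx -> 'I_n).
Variables (u : vtx) (T : 'I_n).
Hypothesis cyc : forall x, cyclic_order (rho x).

Local Notation step := (bern_step rho T).
Local Notation k := (findex (rho u) (e0 u) T).

Lemma lt_findex_n : k < n.
Proof. exact: findex_cyclic_lt. Qed.

Lemma n_gt0 : 0 < n.
Proof. exact: leq_ltn_trans (leq0n k) lt_findex_n. Qed.

Lemma iter_findex_T : iter k (rho u) (e0 u) = T.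
Proof. exact: iter_findex_cyclic. Qed.

Lemma rho_T_iter : rho u T = iter k.+1 (rho u) (e0 u).
Proof. by rewrite iterS iter_findex_T. Qed.

Lemma iter_neq_T i : i < n -> i != k -> iter i (rho u) (e0 u) != T.
Proof.
by move=> lt_in; apply: contra_neq => <-; rewrite findex_iter ?order_cyclic.
Qed.

Lemma bern_walk x e m : (forall i, i < m -> iter i (rho x) e != T) ->
  traject step (e, x) m = map (pair^~ x) (traject (rho x) e m) /\
  iter m step (e, x) = (iter m (rho x) e, x).
Proof.
elim: m => [|m IHm] neq_T //.
have [walk_m end_m] := IHm (fun i lt_im => neq_T i (ltnW lt_im)).
by rewrite !trajectSr map_rcons walk_m iterS end_m /bern_step /= (negbTE (neq_T m _)).
Qed.

Lemma bern_walk_cross x e m : (forall i, i < m -> iter i (rho x) e != T) ->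
    iter m (rho x) e = T ->
  traject step (e, x) m.+1 = map (pair^~ x) (traject (rho x) e m.+1) /\
  iter m.+1 step (e, x) = (rho (~~ x) T, ~~ x).
Proof.
move=> /bern_walk [walk_m end_m] eq_T.
by rewrite !trajectSr map_rcons walk_m iterS end_m eq_T /bern_step /= eqxx.
Qed.

Let tour_to_T := map (pair^~ u) (traject (rho u) (e0 u) k.+1).
Let tour_far := map (pair^~ (~~ u)) (traject (rho (~~ u)) (rho (~~ u) T) n).
Let tour_from_T := map (pair^~ u) (traject (rho u) (rho u T) (n - k.+1)).

Lemma bern_walk_to_T :
  traject step (e0 u, u) k.+1 = tour_to_T /\
  iter k.+1 step (e0 u, u) = (rho (~~ u) T, ~~ u).
Proof.
apply: bern_walk_cross iter_findex_T => i lt_ik.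
by rewrite iter_neq_T ?(ltn_trans lt_ik lt_findex_n) ?(negbT (ltn_eqF lt_ik)).
Qed.

Lemma bern_walk_far :
  traject step (rho (~~ u) T, ~~ u) n = tour_far /\
  iter n step (rho (~~ u) T, ~~ u) = (rho u T, u).
Proof.
have far_neq_T i : i < n.-1 -> iter i (rho (~~ u)) (rho (~~ u) T) != T.
  move=> lt_i; rewrite -iterSr -[X in _ != X]/(iter 0 (rho (~~ u)) T).
  by rewrite eq_iter_cyclic //; lia.
have far_end : iter n.-1 (rho (~~ u)) (rho (~~ u) T) = T.
  by rewrite -iterSr prednK ?n_gt0 // iter_cyclic_n.
have [walk end_walk] := bern_walk_cross far_neq_T far_end.
by rewrite prednK ?n_gt0 // negbK in walk end_walk.
Qed.

Lemma bern_walk_from_T :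
  traject step (rho u T, u) (n - k.+1) = tour_from_T /\
  iter (n - k.+1) step (rho u T, u) = (e0 u, u).
Proof.
have after_neq_T i : i < n - k.+1 -> iter i (rho u) (rho u T) != T.
  by move=> lt_i; rewrite rho_T_iter -iterD iter_neq_T //; lia.
have [-> ->] := bern_walk after_neq_T; split => //.
by rewrite rho_T_iter -iterD subnK ?iter_cyclic_n ?lt_findex_n.
Qed.

Lemma traject_split_T : traject (rho u) (e0 u) n =
  traject (rho u) (e0 u) k.+1 ++ traject (rho u) (rho u T) (n - k.+1).
Proof. by rewrite rho_T_iter -trajectD subnKC // lt_findex_n. Qed.

Lemma tour_uniq : uniq (tour_to_T ++ tour_far ++ tour_from_T).
Proof.
have inj_pair x : injective (pair^~ x : 'I_n -> 'I_n * vtx) by move=> e e' [].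
have reorder : perm_eq (tour_to_T ++ tour_far ++ tour_from_T)
                       ((tour_to_T ++ tour_from_T) ++ tour_far).
  by rewrite -catA perm_cat2l perm_catC.
rewrite (perm_uniq reorder) -map_cat -traject_split_T cat_uniq.
rewrite !map_inj_uniq ?traject_cyclic_uniq //= andbT.
by apply/hasPn => _ /mapP [e _ ->]; apply/mapP => -[e' _ [_]]; case: (u).
Qed.

Lemma bern_tourE : bern_tour rho e0 u T = tour_to_T ++ tour_far ++ tour_from_T.
Proof.
have [walk1 end1] := bern_walk_to_T; have [walk2 end2] := bern_walk_far.
have [walk3 end3] := bern_walk_from_T.
set N := k.+1 + n + (n - k.+1).
have tourN : traject step (e0 u, u) N = tour_to_T ++ tour_far ++ tour_from_T.
  by rewrite !trajectD walk1 end1 walk2 -catA (addnC k.+1) iterD end1 end2 walk3.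
have iterN : iter N step (e0 u, u) = (e0 u, u).
  by rewrite /N addnC iterD (addnC k.+1) iterD end1 end2 end3.
have orderN : fingraph.order step (e0 u, u) = N.
  rewrite -(size_traject step (e0 u, u) N).
  rewrite (order_cycle (fcycle_traject _ iterN)) ?tourN ?tour_uniq //.
  by rewrite -tourN /N addSn mem_head.
by rewrite /bern_tour /fingraph.orbit orderN tourN.
Qed.

Lemma uniq_traject_to_T : uniq (traject (rho u) (e0 u) k.+1).
Proof.
by rewrite -(take_traject _ _ lt_findex_n) take_uniq ?traject_cyclic_uniq.
Qed.

Lemma mem_T_traject_to_T : T \in traject (rho u) (e0 u) k.+1.
Proof. by rewrite trajectSr mem_rcons iter_findex_T mem_head. Qed.

Lemma mem_tour_far e : (e, ~~ u) \in tour_far.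
Proof. by rewrite mem_map_pair mem_traject_cyclic. Qed.

Lemma bern_div_root : bern_div rho e0 u T u = k.
Proof.
have neq_u : ~~ u != u by case: (u).
rewrite bern_div_chips bern_tourE !chips_cat (chips_off_vertex _ _ _ neq_u).
rewrite !chips_at_vertex [X in _ + X](@eq_count _ _ pred0) => [|e]; last first.
  by rewrite chip_atE !mem_cat mem_tour_far orbT !andbF.
rewrite (@eq_count _ _ (predC (pred1 T))) => [|e]; last by rewrite chip_atE eqxx andbT.
have := count_predC (pred1 T) (traject (rho u) (e0 u) k.+1).
rewrite count_pred0 count_uniq_mem ?uniq_traject_to_T // mem_T_traject_to_T.
by rewrite size_traject; lia.
Qed.

Lemma bern_div_far : bern_div rho e0 u T (~~ u) = n - k.+1.
Proof.
have neq_u : u != ~~ u by case: (u).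
rewrite bern_div_chips bern_tourE !chips_cat !(chips_off_vertex _ _ _ neq_u).
rewrite chips_at_vertex (@eq_count _ _ [predC traject (rho u) (e0 u) k.+1]) => [|e].
  by rewrite count_predC_traject_cyclic ?uniq_traject_to_T // size_traject addn0.
rewrite chip_atE eqxx negbK mem_map_pair inE andTb; apply: andb_idl.
by apply: contraNneq => ->; exact: mem_T_traject_to_T.
Qed.

End BernardiTour.

Lemma bern_rel_unit_divP n (rho : vtx -> {perm 'I_n}) e0 u T T' :
    (forall x, cyclic_order (rho x)) ->
  bern_rel rho e0 u (unit_div u) T T' <-> T' = rho u T.
Proof.
move=> cyc; have lt_k := lt_findex_n e0 u T cyc.
have lt_k' := lt_findex_n e0 u T' cyc.
have neq_u : (~~ u == u) = false by case: (u).
have eq_deg : (bern_div rho e0 u T u + unit_div u u +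
               (bern_div rho e0 u T (~~ u) + unit_div u (~~ u)) =
               bern_div rho e0 u T' u + bern_div rho e0 u T' (~~ u))%R.
  by rewrite !bern_div_root ?bern_div_far // /unit_div eqxx neq_u; lia.
rewrite /bern_rel (lin_equiv_two_vertex _ eq_deg) !bern_div_root // /unit_div eqxx.
rewrite -PoszD addn1 (modn_int_shift _ lt_k') -findex_succ //.
by split => [/(findex_cyclic_inj (cyc u))|->].
Qed.

Theorem proposition3p6 (k : torsor_kind) (n : nat)
  (rho rho' : vtx -> {perm 'I_n}) (e0 e0' : vtx -> 'I_n)
  (phi : 'I_n -> 'I_n) :
  (0 < n)%N ->
  (forall u, cyclic_order (rho u)) ->
  (forall u, cyclic_order (rho' u)) ->
  bijective phi ->
  (forall (u : vtx) (S : divisor) (T T' : 'I_n), deg0 S ->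
     torsor_rel k rho e0 u S T T' ->
     torsor_rel k rho' e0' u (gamma_hat S) (phi T) (phi T')) ->
  genus rho = genus rho'.
Proof.
move=> _ cyc cyc' bij_phi compat.
suff comm x e : phi (rho x e) = rho' x (phi e).
  by rewrite /genus (ncycles_conj bij_phi comm).
have compat_x := compat _ (unit_div x) e _ (deg0_unit_div x).
case: k compat_x {compat} => /= compat_x.
- by have := compat_x (~~ x) _ erefl; rewrite /gamma_hat !rotor_unit_div.
- by apply/(bern_rel_unit_divP _ _ _ _ cyc')/compat_x/bern_rel_unit_divP.
Qed.
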